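(* Fix $p\in(\tfrac12,1)$ and let $\{B_n\}_{n\ge1}$ be a sequence with $B_n\in\{1,\dots,n\}$ and $\lim_{n\to\infty}B_n/n=q$ for some $q\in[0,1]$. Then $$\lim_{n\to\infty}\lambda(B_n,n)=\begin{cases}0 & \text{if } q\le 1-p,\\ \dfrac{q-(1-p)}{p} & \text{otherwise.}\end{cases}$$
   Context: The crowdfunding game $\Gamma(B,n)$ with parameter $p\in(\tfrac12,1)$: there are $n$ players and a threshold $B\in\{1,\dots,n\}$. A state $\omega\in\{H,L\}$ is drawn with probability $\tfrac12$ each. Conditional on $\omega$, each player $i$ independently receives a signal $s_i\in\{H,L\}$ with $\Pr(s_i=\omega\mid\omega)=p$. Players simultaneously choose $a_i\in\{0,1\}$. Player $i$'s payoff is $1$ if $a_i=1$, $\sum_j a_j\ge B$ and $\omega=H$; $-1$ if $a_i=1$, $\sum_j a_j\ge B$ and $\omega=L$; and $0$ otherwise. A strategy is a map $\sigma_i:\{H,L\}\to[0,1]$ giving the probability of action $1$ after each signal; Bayes-Nash equilibrium is defined as usual. A profile is non-trivial if $\Pr_\sigma(\sum_i a_i\ge B)>0$, and symmetric if all players use the same strategy. It is known that each $\Gamma(B,n)$ has a unique symmetric non-trivial Bayes-Nash equilibrium, and in it every player plays $1$ with probability $1$ after signal $H$ and plays $1$ with probability $\lambda(B,n)\in[0,1)$ after signal $L$; this defines $\lambda(B,n)$. *)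

From HB Require Import structures.
From mathcomp Require Import all_boot all_order all_algebra.
From mathcomp Require Import all_classical all_reals all_analysis.
Set Implicit Arguments. Unset Strict Implicit. Unset Printing Implicit Defensive.
Import Order.TTheory GRing.Theory Num.Theory.
Local Open Scope ring_scope.

(* Conventions: state / signal / action are booleans.
   state w = true  means  omega = H ;  signal s = true means s_i = H ;
   action a = true means a_i = 1.
   A strategy is a map bool -> R giving Pr(a_i = 1 | s_i). *)

Section Crowdfunding.
Variable R : realType.

Definition sig_prob (p : R) (w s : bool) : R := if s == w then p else 1 - p.

Definition act_prob (x : R) (a : bool) : R := if a then x else 1 - x.

Definition funded (B n : nat) (a : {ffun 'I_n -> bool}) : bool :=
  (B <= \sum_(i < n) (a i : nat))%N.

Definition outcome_prob (p : R) (n : nat) (sigma : 'I_n -> bool -> R)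
  (w : bool) (s a : {ffun 'I_n -> bool}) : R :=
  (1 / 2) * (\prod_(i < n) sig_prob p w (s i))
          * (\prod_(i < n) act_prob (sigma i (s i)) (a i)).

Definition payoff (B n : nat) (i : 'I_n) (w : bool) (a : {ffun 'I_n -> bool}) : R :=
  if a i && funded B a then (if w then 1 else -1) else 0.

Definition exp_payoff (p : R) (B n : nat) (sigma : 'I_n -> bool -> R) (i : 'I_n) : R :=
  \sum_(w : bool) \sum_(s : {ffun 'I_n -> bool}) \sum_(a : {ffun 'I_n -> bool})
     outcome_prob p sigma w s a * payoff B i w a.

Definition prob_funded (p : R) (B n : nat) (sigma : 'I_n -> bool -> R) : R :=
  \sum_(w : bool) \sum_(s : {ffun 'I_n -> bool}) \sum_(a : {ffun 'I_n -> bool})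
     outcome_prob p sigma w s a * (if funded B a then 1 else 0).

Definition valid_strategy (tau : bool -> R) : Prop :=
  forall s, 0 <= tau s <= 1.

Definition deviate (n : nat) (sigma : 'I_n -> bool -> R) (i : 'I_n) (tau : bool -> R)
  : 'I_n -> bool -> R := fun j => if j == i then tau else sigma j.

(* Bayes-Nash equilibrium of Gamma(B,n) (ex-ante formulation; since every
   signal has positive probability this is equivalent to interim optimality). *)
Definition is_BNE (p : R) (B n : nat) (sigma : 'I_n -> bool -> R) : Prop :=
  (forall i, valid_strategy (sigma i)) /\
  (forall (i : 'I_n) (tau : bool -> R), valid_strategy tau ->
     exp_payoff p B (deviate sigma i tau) i <= exp_payoff p B sigma i).

Definition nontrivial (p : R) (B n : nat) (sigma : 'I_n -> bool -> R) : Prop :=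
  0 < prob_funded p B sigma.

Definition sym_profile (n : nat) (l : R) : 'I_n -> bool -> R :=
  fun _ s => if s then 1 else l.

(* l = lambda(B,n): (1, l) is the (unique) symmetric non-trivial BNE, l in [0,1) *)
Definition is_lambda (p : R) (B n : nat) (l : R) : Prop :=
  0 <= l < 1 /\ is_BNE p B (@sym_profile n l) /\ nontrivial p B (@sym_profile n l).

End Crowdfunding.

From HB Require Import structures.
From mathcomp Require Import all_boot all_order all_algebra.
From mathcomp Require Import all_classical all_reals all_analysis.
#[warning="-warn-library-file-internal-analysis"]
From mathcomp Require Import unstable.
From mathcomp Require Import ring lra zify.
Set Implicit Arguments. Unset Strict Implicit. Unset Printing Implicit Defensive.
Import Order.TTheory GRing.Theory Num.Theory.
Import numFieldNormedType.Exports.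
Local Open Scope classical_set_scope.
Local Open Scope ring_scope.

(** In the symmetric profile (1, l) a player's payoff is linear in her own
   strategy, and the coefficient of her investment after signal L is
   (1 - p) T_H - p T_L, where T_w is the probability that at least B - 1 of the
   other n - 1 players invest in state w: a binomial tail with success
   probability a_H = p + (1 - p) l, resp. a_L = 1 - p + p l.  Equilibrium thus
   forces (1 - p) T_H <= p T_L, with equality when l > 0.

   Binomial tails obey a Chernoff-type bound, obtained from the monotone
   likelihood ratio, weighted AM-GM and the Bhattacharyya coefficient: they are
   exponentially close to 1 (resp. 0) when the success probability exceeds
   (resp. falls short of) B/n by a fixed margin, and T_L / T_H is exponentially
   small when a_H - a_L is bounded below and B/n is not far below a_H.  Hence
   a_L can neither exceed q by a margin (then p T_L is close to p > 1 - p) nor,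
   when q > 1 - p, fall short of q by a margin (then p T_L is negligible against
   (1 - p) T_H); so a_L tends to max(q, 1 - p). *)

Lemma AGM_weighted2 (F : realFieldType) (u v : F) k m : 0 <= u -> 0 <= v -> (k <= m)%N ->
  u ^+ k * v ^+ (m - k) <= ((k%:R * u + (m - k)%:R * v) / m%:R) ^+ m.
Proof.
move=> u0 v0 km.
pose E (i : 'I_k + 'I_(m - k)) := if i is inl _ then u else v.
have := (@leif_AGM F _ (fun=> true) E (fun i _ => if i is inl _ then u0 else v0)).1.
rewrite (@eq_card _ _ predT) // card_sum !card_ord subnKC //.
rewrite [\prod_(i in _) _]big_mkcond [\sum_(i in _) _]big_mkcond !big_sumType /=.
rewrite prodr_const card_ord prodr_const card_ord.
have sum_const n (x : F) : \sum_(i < n) x = n%:R * x by rewrite sumr_const card_ord mulr_natl.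
by rewrite !sum_const.
Qed.

Lemma bhattacharyya_le (F : rcfType) (a y : F) : 0 <= a <= 1 -> 0 <= y <= 1 ->
  Num.sqrt a * Num.sqrt y + Num.sqrt (1 - a) * Num.sqrt (1 - y) <= 1 - (a - y) ^+ 2 / 8.
Proof.
move=> /andP[a0 a1] /andP[y0 y1].
have sqrt_sq (x : F) : 0 <= x -> Num.sqrt x ^+ 2 = x by move=> ?; rewrite sqr_sqrtr.
set A := Num.sqrt a; set Y := Num.sqrt y.
set A' := Num.sqrt (1 - a); set Y' := Num.sqrt (1 - y).
have [A0 Y0] : 0 <= A /\ 0 <= Y by rewrite !sqrtr_ge0.
have [A1 Y1] : A <= 1 /\ Y <= 1 by rewrite -sqrtr1 !ler_wsqrtr.
have hA : A ^+ 2 + A' ^+ 2 = 1 by rewrite !sqrt_sq ?subr_ge0 // addrC subrK.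
have hY : Y ^+ 2 + Y' ^+ 2 = 1 by rewrite !sqrt_sq ?subr_ge0 // addrC subrK.
have <- : A ^+ 2 = a by rewrite sqrt_sq.
have <- : Y ^+ 2 = y by rewrite sqrt_sq.
have gap : (A - Y) ^+ 2 + (A' - Y') ^+ 2 =
    (A ^+ 2 + A' ^+ 2) + (Y ^+ 2 + Y' ^+ 2) - 2 * (A * Y + A' * Y') by ring.
rewrite hA hY in gap.
have sum_sq : (A + Y) ^+ 2 <= 4 by nra.
have diff_sq : (A ^+ 2 - Y ^+ 2) ^+ 2 <= 4 * (A - Y) ^+ 2.
  by rewrite subr_sqr exprMn mulrC ler_wpM2r // sqr_ge0.
have := sqr_ge0 (A' - Y'); lra.
Qed.

Section BinomialTail.
Variable R : realType.
Implicit Types (a : R) (m k j : nat).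

Definition binomial_tail m a k : R := \sum_(j < m.+1 | (k <= j)%N) binomial_pmf m a j.

Lemma binomial_pmf_sum m a : \sum_(j < m.+1) binomial_pmf m a j = 1.
Proof.
rewrite -[RHS](expr1n _ m) -[1 in RHS](add_onemK a) addrC exprDn.
by apply: eq_bigr => j _; rewrite /binomial_pmf mulrC.
Qed.

Lemma binomial_pmf_onem m a j : (j <= m)%N ->
  binomial_pmf m a.~ (m - j) = binomial_pmf m a j.
Proof. by move=> jm; rewrite /binomial_pmf onemK subKn // bin_sub // mulrC. Qed.

Lemma binomial_tail_onem m a k :
  binomial_tail m a k + binomial_tail m a.~ (m.+1 - k) = 1.
Proof.
rewrite -(binomial_pmf_sum m a) (bigID (fun j : 'I_m.+1 => k <= j)%N) /=.
congr (_ + _); rewrite /binomial_tail (reindex_inj rev_ord_inj) /=.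
apply: eq_big => [j|j _]; last by rewrite subSS binomial_pmf_onem // -ltnS.
by have := ltn_ord j; rewrite subSS -ltnNge; lia.
Qed.

Lemma binomial_tail_ge0 m a k : 0 <= a <= 1 -> 0 <= binomial_tail m a k.
Proof. by move=> a01; apply: sumr_ge0 => j _; exact: binomial_pmf_ge0. Qed.

Lemma binomial_tail_le1 m a k : 0 <= a <= 1 -> binomial_tail m a k <= 1.
Proof.
case/andP=> a0 a1; rewrite -(binomial_tail_onem m a k) lerDl binomial_tail_ge0 //.
by rewrite onem_ge0 // onem_le1.
Qed.

Lemma binomial_tail_gt0 m a k : 0 < a <= 1 -> (k <= m)%N -> 0 < binomial_tail m a k.
Proof.
case/andP=> a0 a1 km; rewrite /binomial_tail (bigD1 ord_max) //=.
rewrite ltr_pwDl //; last by apply: sumr_ge0 => j _; rewrite binomial_pmf_ge0 // ltW.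
by rewrite /binomial_pmf subnn expr0 mulr1 binn mulr1n exprn_gt0.
Qed.

Lemma binomial_tail_eq0 m a k : (m < k)%N -> binomial_tail m a k = 0.
Proof.
move=> mk; rewrite /binomial_tail big_pred0 // => j.
by apply/negbTE; rewrite -ltnNge (leq_trans (ltn_ord j)).
Qed.

End BinomialTail.

Section LikelihoodRatio.
Variable R : realType.
Implicit Types (a y eta : R) (m k j : nat).

Lemma expr_ratio_antitone (r s : R) m k j : 0 <= r <= 1 -> 1 <= s -> (k <= j <= m)%N ->
  r ^+ j * s ^+ (m - j) <= r ^+ k * s ^+ (m - k).
Proof.
case/andP=> r0 r1 s1 /andP[kj jm].
rewrite -(subnKC kj) -[(m - k)%N](@subnK (j - k)) ?subnDA; last by lia.
rewrite !exprD -mulrA ler_wpM2l ?exprn_ge0 // mulrC ler_wpM2l ?exprn_ge0 //.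
  exact: le_trans ler01 s1.
exact: le_trans (exprn_ile1 _ r0 r1) (exprn_ege1 _ s1).
Qed.

Lemma binomial_pmf_ratio m a y j : 0 < y < 1 ->
  binomial_pmf m a j = binomial_pmf m y j * ((a / y) ^+ j * (a.~ / y.~) ^+ (m - j)).
Proof.
case/andP=> y0 y1.
have yj : y ^+ j != 0 by rewrite expf_neq0 // gt_eqF.
have ymj : y.~ ^+ (m - j) != 0 by rewrite expf_neq0 // gt_eqF // onem_gt0.
rewrite /binomial_pmf !expr_div_n mulrnAl; congr (_ *+ _).
by field; rewrite ymj yj.
Qed.

Lemma binomial_tail_le_ratio m k a y : 0 <= a <= y -> 0 < y < 1 -> (k <= m)%N ->
  binomial_tail m a k <= (a / y) ^+ k * (a.~ / y.~) ^+ (m - k) * binomial_tail m y k.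
Proof.
case/andP=> a0 ay y01 km; have /andP[y0 y1] := y01.
rewrite /binomial_tail mulr_sumr; apply: ler_sum => j kj.
have y01w : 0 <= y <= 1 by rewrite !ltW.
rewrite (binomial_pmf_ratio _ _ _ y01) mulrC ler_wpM2r ?binomial_pmf_ge0 //.
apply: expr_ratio_antitone.
- by rewrite divr_ge0 ?ler_pdivrMr ?mul1r // ltW.
- by rewrite ler_pdivlMr ?onem_gt0 // mul1r lerB.
- by rewrite kj -ltnS ltn_ord.
Qed.


Lemma weighted_mean_le (u v y eta : R) k m : 0 <= u <= v -> 0 <= eta ->
  (0 < m)%N -> (k <= m)%N -> (y - eta) * m%:R <= k%:R ->
  (k%:R * u + (m - k)%:R * v) / m%:R <= y * u + (1 - y) * v + eta * v.
Proof.
move=> /andP[u0 uv] eta0 m0 km hk; rewrite natrB // ler_pdivrMr ?ltr0n //.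
have : 0 <= (k%:R - (y - eta) * m%:R) * (v - u) by rewrite mulr_ge0 // subr_ge0.
have : 0 <= eta * m%:R * u by rewrite mulr_ge0 // mulr_ge0.
nra.
Qed.

(* With a/y = u^2 and a.~/y.~ = v^2, weighted AM-GM bounds u^k v^(m-k) by the
   weighted mean of u and v, which is at most the Bhattacharyya coefficient
   sqrt(a y) + sqrt(a.~ y.~) up to the slack eta. *)
Lemma likelihood_ratio_le m k (a y eta : R) : 0 <= a <= y -> 0 < y < 1 -> 0 <= eta ->
  (0 < m)%N -> (k <= m)%N -> (y - eta) * m%:R <= k%:R ->
  (a / y) ^+ k * (a.~ / y.~) ^+ (m - k) <= (1 - (y - a) ^+ 2 / 8 + eta / y.~) ^+ (2 * m).
Proof.
case/andP=> a0 ay /andP[y0 y1] eta0 m0 km hk.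
have [a1 y'0] : a <= 1 /\ 0 < y.~ by rewrite onem_gt0 // (le_trans ay) // ltW.
set Y := Num.sqrt y; set Y' := Num.sqrt y.~; set A := Num.sqrt a; set A' := Num.sqrt a.~.
have [Y0 Y'0] : 0 < Y /\ 0 < Y' by rewrite !sqrtr_gt0.
have [YY Y'Y'] : Y ^+ 2 = y /\ Y' ^+ 2 = y.~ by rewrite !sqr_sqrtr // ltW.
set u := A / Y; set v := A' / Y'.
have [u0 v0] : 0 <= u /\ 0 <= v by rewrite !divr_ge0 ?sqrtr_ge0 // ltW.
have u1 : u <= 1 by rewrite ler_pdivrMr // mul1r ler_wsqrtr.
have v1 : 1 <= v by rewrite ler_pdivlMr // mul1r ler_wsqrtr // lerB.
have v_le : v <= y.~^-1.
  have [A'1 Y'1] : A' <= 1 /\ Y' <= 1 by rewrite -sqrtr1 !ler_wsqrtr // onem_le1 // ltW.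
  rewrite -[_^-1]mul1r ler_pdivlMr // -Y'Y' expr2 mulrA divfK ?gt_eqF //.
  by rewrite mulr_ile1 ?sqrtr_ge0 // ltW.
have bhat : y * u + y.~ * v <= 1 - (y - a) ^+ 2 / 8.
  have sq_mul_div (X Z : R) : 0 < Z -> Z ^+ 2 * (X / Z) = X * Z.
    by move=> Z0; field; rewrite gt_eqF.
  have -> : y * u + y.~ * v = A * Y + A' * Y' by rewrite -Y'Y' -YY !sq_mul_div.
  by rewrite -sqrrN opprB bhattacharyya_le // ?a0 ?a1 ?ltW.
have mean0 : 0 <= (k%:R * u + (m - k)%:R * v) / m%:R.
  by rewrite divr_ge0 // addr_ge0 // mulr_ge0.
have mean_le : (k%:R * u + (m - k)%:R * v) / m%:R <= 1 - (y - a) ^+ 2 / 8 + eta / y.~.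
  have uv : 0 <= u <= v by rewrite u0 (le_trans u1).
  apply: le_trans (weighted_mean_le uv eta0 m0 km hk) _.
  by rewrite lerD // ler_wpM2l.
have -> : a / y = u ^+ 2 by rewrite expr_div_n sqr_sqrtr // YY.
have -> : a.~ / y.~ = v ^+ 2 by rewrite expr_div_n sqr_sqrtr ?onem_ge0 // Y'Y'.
have base0 := le_trans mean0 mean_le.
rewrite !(exprAC _ 2) -exprMn (mulnC 2) exprM lerXn2r ?nnegrE ?mulr_ge0 ?exprn_ge0 //.
apply: le_trans (AGM_weighted2 u0 v0 km) _.
by rewrite lerXn2r ?nnegrE.
Qed.

End LikelihoodRatio.

Section Chernoff.
Variable R : realType.
Implicit Types (a y d eta : R) (m k : nat).

Lemma binomial_tail_ratio_le m k a y d eta : 0 <= a -> a + d <= y -> 0 < y < 1 ->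
  0 <= d -> 0 <= eta -> eta / y.~ <= d ^+ 2 / 16 -> (0 < m)%N -> (y - eta) * m%:R <= k%:R ->
  binomial_tail m a k <= (1 - d ^+ 2 / 16) ^+ (2 * m) * binomial_tail m y k.
Proof.
move=> a0 ady y01 d0 eta0 small m0 hk; have /andP[y0 y1] := y01.
have y01w : 0 <= y <= 1 by rewrite !ltW.
have ay : 0 <= a <= y by rewrite a0; lra.
have [km|mk] := leqP k m; last first.
  by rewrite binomial_tail_eq0 // mulr_ge0 ?binomial_tail_ge0 // exprn_even_ge0 // mul2n odd_double.
apply: le_trans (binomial_tail_le_ratio ay y01 km) _.
rewrite ler_wpM2r ?binomial_tail_ge0 //.
apply: le_trans (likelihood_ratio_le ay y01 eta0 m0 km hk) _.
have ya1 : (y - a) ^+ 2 <= 1 by rewrite expr_le1 ?subr_ge0 //; lra.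
have dya : d ^+ 2 <= (y - a) ^+ 2 by rewrite lerXn2r ?nnegrE ?subr_ge0 //; lra.
have eta_y : 0 <= eta / y.~ by rewrite divr_ge0 // onem_ge0 // ltW.
rewrite lerXn2r ?nnegrE //; lra.
Qed.

Lemma binomial_tail_le_gap m k a y d : 0 <= a -> a + d <= y -> 0 < y < 1 -> 0 <= d ->
  (0 < m)%N -> y * m%:R <= k%:R -> binomial_tail m a k <= (1 - d ^+ 2 / 16) ^+ (2 * m).
Proof.
move=> a0 ady y01 d0 m0 hk; have /andP[y0 y1] := y01.
have small : 0 / y.~ <= d ^+ 2 / 16 by rewrite mul0r divr_ge0 ?sqr_ge0.
have := binomial_tail_ratio_le a0 ady y01 d0 (lexx 0) small m0.
rewrite subr0 => /(_ k hk) /le_trans; apply.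
have base0 : 0 <= 1 - d ^+ 2 / 16.
  suff : d ^+ 2 <= 1 by lra.
  by rewrite expr_le1 //; lra.
have y01w : 0 <= y <= 1 by rewrite !ltW.
by rewrite -[X in _ <= X]mulr1 ler_wpM2l ?exprn_ge0 ?binomial_tail_le1.
Qed.

Lemma binomial_tail_ge_gap m k a y d : y + d <= a <= 1 -> 0 < y < 1 -> 0 <= d ->
  (0 < m)%N -> k%:R <= y * m%:R -> 1 - (1 - d ^+ 2 / 16) ^+ (2 * m) <= binomial_tail m a k.
Proof.
case/andP=> yda a1 y01 d0 m0 hk; have /andP[y0 y1] := y01.
have km : (k <= m)%N.
  by rewrite -(ler_nat R); apply: le_trans hk _; rewrite ler_piMl // ltW.
suff : binomial_tail m a.~ (m.+1 - k) <= (1 - d ^+ 2 / 16) ^+ (2 * m).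
  by have := binomial_tail_onem m a k; lra.
apply: (binomial_tail_le_gap (y := y.~)); rewrite ?onem_ge0 ?onem_gt0 ?onem_lt1 //.
- by rewrite /onem; lra.
- rewrite natrB ?(leq_trans km) // mulrBl mul1r -natr1; lra.
Qed.

End Chernoff.

Section Eventually.
Variable R : realType.

Lemma near_expr_lt (z t : R) : 0 <= z < 1 -> 0 < t -> \forall m \near \oo, z ^+ (2 * m) < t.
Proof.
case/andP=> z0 z1 t0.
have : (fun m => (z ^+ 2) ^+ m) @ \oo --> 0.
  by apply: cvg_expr; rewrite ger0_norm ?exprn_ge0 // expr_lt1.
move/cvgrPdist_lt/(_ t t0); apply: filterS => m.
by rewrite sub0r normrN ger0_norm ?exprn_ge0 // -exprM.
Qed.

Lemma near_count_bounds (x : nat -> nat) (q d : R) : (forall m, (0 < x m)%N) ->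
  (fun m => (x m)%:R / m.+1%:R) @ \oo --> q -> 0 < d ->
  \forall m \near \oo, (q - d) * m%:R <= (x m).-1%:R <= (q + d) * m%:R.
Proof.
move=> x_gt0 hx d0; near=> m.
have ratio : `|q - (x m)%:R / m.+1%:R| <= d / 2.
  by near: m; move/cvgrPdist_le: hx; apply; rewrite divr_gt0.
have large : (2 * `|q| + d + 2) / d <= m%:R by near: m; exact: nbhs_infty_ger.
have m1 : 0 < m.+1%:R :> R by rewrite ltr0n.
have -> : (x m).-1%:R = (x m)%:R - 1 :> R by rewrite -[in RHS](prednK (x_gt0 m)) -natr1 addrK.
move: ratio; rewrite ler_norml => /andP[lo hi].
rewrite ler_pdivrMr // in large.
set r := (x m)%:R / m.+1%:R in lo hi.
have -> : (x m)%:R = r * (m%:R + 1) by rewrite /r natr1 divfK // gt_eqF.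
have := ler_norm q; have := ler_norm (- q); rewrite normrN.
nra.
Unshelve. all: by end_near. Qed.

End Eventually.

Lemma bigA_distr_bigA2 (R : comSemiRingType) (I T U : finType) (G : I -> T -> U -> R) :
  \prod_i \sum_t \sum_b G i t b =
  \sum_(s : {ffun I -> T}) \sum_(a : {ffun I -> U}) \prod_i G i (s i) (a i).
Proof.
rewrite (bigA_distr_bigA (fun i t => \sum_b G i t b)) /=.
by apply: eq_bigr => s _; rewrite (bigA_distr_bigA (fun i b => G i (s i) b)).
Qed.

Lemma prod_scale_Xn (R : comNzRingType) (I : finType) (x : I -> R) (e : I -> nat) :
  \prod_i (x i *: 'X^(e i)) = (\prod_i x i) *: 'X^(\sum_i e i) :> {poly R}.
Proof.
rewrite -mul_polyC rmorph_prod -prodrXr -big_split /=.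
by apply: eq_bigr => i _; rewrite mul_polyC.
Qed.

Section UpperMass.
Variables (R : realType) (B n : nat).

(* When [P] is the generating polynomial of the number of investors among [n]
   players, [upper_mass P] is the probability that at least [B] of them invest. *)
Definition upper_mass (P : {poly R}) : R := \sum_(c < n.+1 | (B <= c)%N) P`_c.

Lemma upper_mass_sum (I : finType) (P : I -> {poly R}) :
  upper_mass (\sum_i P i) = \sum_i upper_mass (P i).
Proof.
by rewrite /upper_mass exchange_big; apply: eq_bigr => c _; rewrite coef_sum.
Qed.

Lemma upper_mass_scale x P : upper_mass (x *: P) = x * upper_mass P.
Proof. by rewrite /upper_mass mulr_sumr; apply: eq_bigr => c _; rewrite coefZ. Qed.

Lemma upper_mass_Xn K : (K <= n)%N -> upper_mass 'X^K = (B <= K)%N%:R.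
Proof.
rewrite -ltnS => Kn; rewrite /upper_mass big_mkcond (bigD1 (Ordinal Kn)) //= coefXn eqxx.
rewrite big1 ?addr0 => [|c /eqP cK]; first by case: leqP.
rewrite coefXn; case: eqP => [cK'|_]; last by case: ifP.
by case: cK; apply: val_inj.
Qed.

End UpperMass.

Section BinomialPoly.
Variable R : realType.

Lemma coef_binomial_poly m (a : R) j : (j <= m)%N ->
  ((a.~%:P + a *: 'X) ^+ m)`_j = binomial_pmf m a j.
Proof.
rewrite -ltnS => jm; rewrite exprDn coef_sum (bigD1 (Ordinal jm)) //= big1 ?addr0.
  by rewrite coefMn -polyC_exp exprZn -scalerAr coefZ coefCM coefXn eqxx mulr1.
move=> c /eqP cj; rewrite coefMn -polyC_exp exprZn -scalerAr coefZ coefCM coefXn.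
by case: eqP => [jc|]; [case: cj; apply: val_inj | rewrite !mulr0 mul0rn].
Qed.

Lemma upper_mass_binomial B m (a b : R) : (0 < B)%N ->
  upper_mass B m.+1 ((b *: 'X) * (a.~%:P + a *: 'X) ^+ m) = b * binomial_tail m a B.-1.
Proof.
move=> B0; rewrite -scalerAl upper_mass_scale; congr (_ * _).
rewrite /upper_mass /binomial_tail big_mkcond big_ord_recl /= leqn0 gt_eqF // add0r.
rewrite [RHS]big_mkcond; apply: eq_bigr => c _; rewrite /bump /= add1n coefXM /=.
by rewrite -[B in (B <= _)%N](prednK B0) ltnS coef_binomial_poly // -ltnS.
Qed.

End BinomialPoly.

Section ExpectedPayoff.
Variables (R : realType) (p : R).

Definition invest_prob (w : bool) (tau : bool -> R) : R :=
  \sum_(t : bool) sig_prob p w t * tau t.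

(* Player [j]'s factor in the generating polynomial of the number of investors,
   jointly with her signal [t] and action [b] in state [w]; for the payoff of
   player [i] only her outcomes with [b = true] count. *)
Definition player_poly n (sigma : 'I_n -> bool -> R) (i : 'I_n) (w : bool)
    (j : 'I_n) (t b : bool) : {poly R} :=
  (sig_prob p w t * act_prob (sigma j t) b * (if j == i then b%:R else 1)) *: 'X^b.

Lemma outcome_payoff_mass B n (sigma : 'I_n -> bool -> R) i w s a :
  outcome_prob p sigma w s a * payoff R B i w a =
  (if w then 1 else -1) / 2 *
    upper_mass B n (\prod_j player_poly sigma i w j (s j) (a j)).
Proof.
have count_le : (\sum_j (a j : nat) <= n)%N.
  by rewrite -[X in (_ <= X)%N]card_ord -sum1_card leq_sum // => j _; case: (a j).
rewrite /player_poly prod_scale_Xn upper_mass_scale upper_mass_Xn // !big_split /=.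
have -> : \prod_j (if j == i then (a j)%:R else 1) = (a i)%:R :> R.
  by rewrite (bigD1 i) //= eqxx big1 ?mulr1 // => j /negPf ->.
rewrite /outcome_prob /payoff /funded.
by case: (a i); case: (B <= _)%N; case: w => /=; ring.
Qed.

Lemma exp_payoff_mass B n (sigma : 'I_n -> bool -> R) i :
  exp_payoff p B sigma i = \sum_(w : bool) (if w then 1 else -1) / 2 *
    upper_mass B n (\prod_j \sum_t \sum_b player_poly sigma i w j t b).
Proof.
apply: eq_bigr => w _; rewrite bigA_distr_bigA2 upper_mass_sum mulr_sumr.
apply: eq_bigr => s _; rewrite upper_mass_sum mulr_sumr.
by apply: eq_bigr => a _; rewrite outcome_payoff_mass.
Qed.

Lemma sig_prob_sum w : \sum_(t : bool) sig_prob p w t = 1.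
Proof. by rewrite big_bool /sig_prob; case: w => /=; ring. Qed.

Lemma player_poly_other n (sigma : 'I_n -> bool -> R) i w j : j != i ->
  \sum_t \sum_b player_poly sigma i w j t b =
  (invest_prob w (sigma j)).~%:P + invest_prob w (sigma j) *: 'X.
Proof.
move/negPf=> ji; have := sig_prob_sum w.
rewrite /player_poly /invest_prob /onem ji !big_bool /= => sum1.
apply/polyP => c; rewrite !(coefD, coefZ, coefC, coefX, coefXn) /act_prob.
by case: c => [|[|c]] /=; rewrite ?mulr0 ?mulr1 ?addr0 ?add0r // -[in RHS]sum1; ring.
Qed.

Lemma player_poly_self n (sigma : 'I_n -> bool -> R) i w :
  \sum_t \sum_b player_poly sigma i w i t b = invest_prob w (sigma i) *: 'X.
Proof.
rewrite /player_poly /invest_prob eqxx !big_bool /=.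
apply/polyP => c; rewrite !(coefD, coefZ, coefC, coefX, coefXn) /act_prob.
by case: c => [|[|c]] /=; rewrite ?mulr0 ?mulr1 ?addr0 ?add0r.
Qed.

Lemma exp_payoff_others B m (sigma : 'I_m.+1 -> bool -> R) i (tau : bool -> R) :
  (0 < B)%N -> (forall j, j != i -> sigma j = tau) ->
  exp_payoff p B sigma i =
    (invest_prob true (sigma i) * binomial_tail m (invest_prob true tau) B.-1 -
     invest_prob false (sigma i) * binomial_tail m (invest_prob false tau) B.-1) / 2.
Proof.
move=> B0 others.
have prod_eq w : \prod_j \sum_t \sum_b player_poly sigma i w j t b =
    (invest_prob w (sigma i) *: 'X) * ((invest_prob w tau).~%:P + invest_prob w tau *: 'X) ^+ m.
  rewrite (bigD1 i) //= player_poly_self (eq_bigr _ (fun j ji => player_poly_other _ _ ji)).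
  rewrite (eq_bigr (fun=> (invest_prob w tau).~%:P + invest_prob w tau *: 'X)) => [|j ji].
    by rewrite prodr_const cardC1 card_ord.
  by rewrite others.
rewrite exp_payoff_mass big_bool /= !prod_eq !upper_mass_binomial //.
by field.
Qed.

End ExpectedPayoff.

Section SymmetricEquilibrium.
Variables (R : realType) (p : R) (B m : nat) (l : R).
Hypothesis B_gt0 : (0 < B)%N.

Let TH := binomial_tail m (p + (1 - p) * l) B.-1.
Let TL := binomial_tail m (1 - p + p * l) B.-1.
Let sym := @sym_profile R m.+1 l.
Let play x : bool -> R := fun s => if s then 1 else x.

Lemma exp_payoff_against_sym (sigma : 'I_m.+1 -> bool -> R) i :
  (forall j, j != i -> sigma j = play l) ->
  exp_payoff p B sigma i =
  (invest_prob p true (sigma i) * TH - invest_prob p false (sigma i) * TL) / 2.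
Proof.
move=> others; rewrite (exp_payoff_others p B_gt0 others).
by rewrite /invest_prob !big_bool /sig_prob /= !mulr1.
Qed.

Lemma sym_lambda_tails : is_lambda p B m.+1 l ->
  (1 - p) * TH <= p * TL /\ (0 < l -> p * TL <= (1 - p) * TH).
Proof.
case=> /andP[l0 l1] [[_ no_dev] _].
pose i : 'I_m.+1 := ord0.
have gain x : exp_payoff p B (deviate sym i (play x)) i - exp_payoff p B sym i =
    (x - l) * ((1 - p) * TH - p * TL) / 2.
  rewrite !exp_payoff_against_sym // => [|j /negPf ji]; last by rewrite /deviate ji.
  by rewrite /deviate eqxx /invest_prob !big_bool /sig_prob /=; field.
have no_gain x : 0 <= x <= 1 -> (x - l) * ((1 - p) * TH - p * TL) <= 0.
  move=> x01; have := no_dev i (play x); rewrite -subr_le0 gain.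
  by rewrite pmulr_lle0 // => ->//= [] //; rewrite ler01 lexx.
split; first by have := no_gain 1; rewrite ler01 lexx => /(_ isT); nra.
by move=> l_gt0; have := no_gain 0; rewrite lexx ler01 => /(_ isT); nra.
Qed.

End SymmetricEquilibrium.

Section EquilibriumBounds.
Variables (R : realType) (p : R).
Hypothesis hp : 1 / 2 < p < 1.

Local Notation TH m k l := (binomial_tail m (p + (1 - p) * l) k).
Local Notation TL m k l := (binomial_tail m (1 - p + p * l) k).

Lemma invest_L_lt m k (l y d : R) : (0 < m)%N -> 0 <= l <= 1 -> 0 < y -> 0 < d ->
  k%:R <= y * m%:R -> (1 - d ^+ 2 / 16) ^+ (2 * m) < (2 * p - 1) / p ->
  p * TL m k l <= (1 - p) * TH m k l -> 1 - p + p * l < y + d.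
Proof.
move=> m0 /andP[l0 l1] y0 d0 hk small tails; rewrite ltNge; apply/negP => gap.
have /andP[p12 p1] := hp; have p0 : 0 < p by lra.
have y1 : y < 1 by nra.
have TL_ge : 1 - (1 - d ^+ 2 / 16) ^+ (2 * m) <= TL m k l.
  have aL1 : 1 - p + p * l <= 1 by nra.
  by apply: (binomial_tail_ge_gap (y := y)); rewrite ?gap ?y0 ?y1 // ltW.
have TH_le : TH m k l <= 1 by apply: binomial_tail_le1; apply/andP; split; nra.
rewrite ltr_pdivlMr // in small.
nra.
Qed.

Lemma TL_le_pow_TH m k l e eta : (0 < m)%N -> 0 <= l -> 0 < e -> l <= 1 - e -> 0 <= eta ->
  3 * eta / ((1 - p) * e) <= ((2 * p - 1) * e) ^+ 2 / 16 ->
  (p + (1 - p) * l - 3 * eta) * m%:R <= k%:R ->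
  TL m k l <= (1 - ((2 * p - 1) * e) ^+ 2 / 16) ^+ (2 * m) * TH m k l.
Proof.
move=> m0 l0 e0 le eta0 eta_ratio hk; have /andP[p12 p1] := hp.
apply: (binomial_tail_ratio_le (y := p + (1 - p) * l) (eta := 3 * eta)) => //; try nra.
apply: le_trans eta_ratio; rewrite ler_wpM2l ?lef_pV2 ?posrE ?mulr_gt0 ?onem_gt0 //; try lra.
all: by rewrite /onem; nra.
Qed.

Lemma invest_L_gt m k (l q e eta : R) : (0 < m)%N -> (k <= m)%N -> 0 <= l -> 0 <= q <= 1 ->
  0 < e -> l <= 1 - e -> 0 < eta -> 2 * eta <= p * e -> eta <= (2 * p - 1) * e ->
  3 * eta / ((1 - p) * e) <= ((2 * p - 1) * e) ^+ 2 / 16 ->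
  (q - eta) * m%:R <= k%:R -> k%:R <= (q + eta) * m%:R ->
  (1 - eta ^+ 2 / 16) ^+ (2 * m) <= (1 - p) / (4 * p) ->
  (1 - p) * TH m k l <= p * TL m k l -> q < 1 - p + p * l + p * e.
Proof.
move=> m0 km l0 /andP[q0 q1] e0 le eta0 eta_pe eta_d eta_ratio hk1 hk2 small tails.
have /andP[p12 p1] := hp; have p0 : 0 < p by lra.
rewrite ltNge; apply/negP => low.
set d := (2 * p - 1) * e in eta_d eta_ratio.
set t := (1 - p) / (4 * p) in small.
have t_le : t <= 1 / 4 by rewrite ler_pdivrMr ?mulr_gt0 //; lra.
have pt : p * t = (1 - p) / 4 by rewrite /t; field; rewrite gt_eqF.
have aH1 : p + (1 - p) * l < 1 by nra.
have aH0 : 0 < p + (1 - p) * l by nra.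
have TH_pos : 0 < TH m k l by rewrite binomial_tail_gt0 // aH0 ltW.
suff : p * TL m k l < (1 - p) * TH m k l by lra.
(* Either a_H exceeds q by a margin, so that T_H is close to 1 while T_L is
   negligible, or k/m is close to a_H and the likelihood ratio bound makes
   T_L / T_H negligible. *)
have [far|close] := lerP (q + 2 * eta) (p + (1 - p) * l).
- have TH_ge : 1 - (1 - eta ^+ 2 / 16) ^+ (2 * m) <= TH m k l.
    by apply: (binomial_tail_ge_gap (y := q + eta)) => //; try (apply/andP; split); lra.
  have TL_le : TL m k l <= (1 - eta ^+ 2 / 16) ^+ (2 * m).
    by apply: (binomial_tail_le_gap (y := q - eta)) => //; try (apply/andP; split); nra.
  nra.
- have TL_le : TL m k l <= (1 - d ^+ 2 / 16) ^+ (2 * m) * TH m k l.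
    apply: TL_le_pow_TH (ltW eta0) eta_ratio _ => //.
    by apply: le_trans hk1; rewrite ler_wpM2r //; lra.
  have base_le : (1 - d ^+ 2 / 16) ^+ (2 * m) <= t.
    have d01 : 0 <= d <= 1 by apply/andP; split; rewrite /d; nra.
    by apply: le_trans small; rewrite lerXn2r ?nnegrE //; nra.
  have : p * TL m k l <= p * t * TH m k l.
    rewrite -mulrA; apply: ler_wpM2l; first exact: ltW.
    by apply: le_trans TL_le _; apply: ler_wpM2r => //; exact: ltW.
  rewrite pt; nra.
Qed.

End EquilibriumBounds.

Section LambdaLimit.
Variables (R : realType) (p q : R).
Hypotheses (hp : 1 / 2 < p < 1) (hq : 0 <= q <= 1).

Definition lambda_limit : R := if q <= 1 - p then 0 else (q - (1 - p)) / p.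

Definition count_slack (e : R) : R := (1 - p) * e * ((2 * p - 1) * e) ^+ 2 / 48.

Local Notation L := lambda_limit.
Local Notation TH m k l := (binomial_tail m (p + (1 - p) * l) k).
Local Notation TL m k l := (binomial_tail m (1 - p + p * l) k).

Lemma lambda_limitP : [/\ 0 <= L, q <= 1 - p + p * L & 1 - p < q -> 1 - p + p * L = q].
Proof.
have /andP[p12 _] := hp.
rewrite /L; case: leP => [qp|pq]; first by rewrite mulr0 addr0.
have pL : p * ((q - (1 - p)) / p) = q - (1 - p) by rewrite mulrC divfK // gt_eqF //; lra.
have L0 : 0 <= (q - (1 - p)) / p by apply: divr_ge0; lra.
by split=> //; rewrite pL; lra.
Qed.

Lemma count_slackP e : 0 < e <= 1 ->
  [/\ 0 < count_slack e, 2 * count_slack e <= p * e, count_slack e <= (2 * p - 1) * e &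
       3 * count_slack e / ((1 - p) * e) <= ((2 * p - 1) * e) ^+ 2 / 16].
Proof.
case/andP=> e0 e1; have /andP[p12 p1] := hp; set d := (2 * p - 1) * e.
have [d0 d1] : 0 < d /\ d <= 1 by split; rewrite /d; nra.
have f0 : 0 < (1 - p) * e by rewrite mulr_gt0 // subr_gt0.
have f1 : (1 - p) * e <= 1 by nra.
have dd : d ^+ 2 <= d by rewrite expr2 ler_piMl // ltW.
rewrite /count_slack -/d; split.
- by rewrite divr_gt0 // mulr_gt0 // exprn_gt0.
- nra.
- nra.
- suff -> : 3 * ((1 - p) * e * d ^+ 2 / 48) / ((1 - p) * e) = d ^+ 2 / 16 by [].
  by field; rewrite !gt_eqF // subr_gt0.
Qed.

Lemma lambda_le_limit m k l e : (0 < m)%N -> 0 <= l < 1 -> 0 < e <= 1 ->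
  k%:R <= (q + count_slack e) * m%:R ->
  (1 - count_slack e ^+ 2 / 16) ^+ (2 * m) < (2 * p - 1) / p ->
  (0 < l -> p * TL m k l <= (1 - p) * TH m k l) -> l <= L + e.
Proof.
move=> m0 /andP[l0 l1] e01 hk small tails.
have [L0 qL _] := lambda_limitP; have [eta0 eta_pe _ _] := count_slackP e01.
have /andP[q0 _] := hq; have /andP[e0 _] := e01.
have [->|l_gt0] := eqVneq l 0; first lra.
have l01 : 0 <= l <= 1 by rewrite l0 ltW.
have : 1 - p + p * l < q + count_slack e + count_slack e.
  by apply: (invest_L_lt hp m0 l01 _ eta0 hk small); [lra | apply: tails; rewrite lt0r l_gt0].
nra.
Qed.

Lemma limit_le_lambda m k l e : (0 < m)%N -> (k <= m)%N -> 0 <= l -> 0 < e <= 1 ->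
  (q - count_slack e) * m%:R <= k%:R -> k%:R <= (q + count_slack e) * m%:R ->
  (1 - count_slack e ^+ 2 / 16) ^+ (2 * m) <= (1 - p) / (4 * p) ->
  (1 - p) * TH m k l <= p * TL m k l -> L - e <= l.
Proof.
move=> m0 km l0 e01 hk1 hk2 small tails.
have [_ _ Lq] := lambda_limitP; have [eta0 eta_pe eta_d eta_ratio] := count_slackP e01.
have /andP[p12 _] := hp; have /andP[_ q1] := hq; have /andP[e0 _] := e01.
have [qp|pq] := leP q (1 - p); first by rewrite /L qp; lra.
have := Lq pq; have [le|gt] := leP l (1 - e); last by nra.
have := invest_L_gt hp m0 km l0 hq e0 le eta0 eta_pe eta_d eta_ratio hk1 hk2 small tails.
nra.
Qed.

Lemma near_count_slack_pow_lt e t : 0 < e <= 1 -> 0 < t ->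
  \forall m \near \oo, (1 - count_slack e ^+ 2 / 16) ^+ (2 * m) < t.
Proof.
move=> e01 t0; apply: near_expr_lt t0; have /andP[p12 p1] := hp.
have [eta0 _ eta_d _] := count_slackP e01; have /andP[e0 e1] := e01.
have : count_slack e <= 1 by apply: le_trans eta_d _; nra.
by move=> ?; apply/andP; split; nra.
Qed.

Lemma near_lambda_close (k : nat -> nat) (l : nat -> R) e :
  (forall m, (k m <= m)%N) -> (forall m, 0 <= l m < 1) ->
  (forall m, (1 - p) * TH m (k m) (l m) <= p * TL m (k m) (l m)) ->
  (forall m, 0 < l m -> p * TL m (k m) (l m) <= (1 - p) * TH m (k m) (l m)) ->
  (forall d, 0 < d -> \forall m \near \oo, (q - d) * m%:R <= (k m)%:R <= (q + d) * m%:R) ->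
  0 < e <= 1 -> \forall m \near \oo, `|L - l m| <= e.
Proof.
move=> km l01 tails_le tails_ge k_near e01; have /andP[p12 p1] := hp.
have [eta0 _ _ _] := count_slackP e01.
near=> m.
have m0 : (0 < m)%N by near: m; exact: nbhs_infty_gt.
have /andP[hk1 hk2] : (q - count_slack e) * m%:R <= (k m)%:R <= (q + count_slack e) * m%:R.
  by near: m; exact: k_near.
have small_lt : (1 - count_slack e ^+ 2 / 16) ^+ (2 * m) < (2 * p - 1) / p.
  by near: m; apply: near_count_slack_pow_lt => //; apply: divr_gt0; lra.
have small_le : (1 - count_slack e ^+ 2 / 16) ^+ (2 * m) <= (1 - p) / (4 * p).
  by apply/ltW; near: m; apply: near_count_slack_pow_lt => //; apply: divr_gt0; lra.
have /andP[l0 _] := l01 m.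
rewrite ler_distlC; apply/andP; split.
- exact: (limit_le_lambda m0 (km m) l0 e01 hk1 hk2 small_le (tails_le m)).
- exact: (lambda_le_limit m0 (l01 m) e01 hk2 small_lt (tails_ge m)).
Unshelve. all: by end_near.
Qed.

End LambdaLimit.

Theorem lemma2 (R : realType) (p : R) (hp : 1 / 2 < p < 1)
  (B : nat -> nat) (q : R) (hq : 0 <= q <= 1)
  (hB : forall n : nat, (0 < n)%N -> (1 <= B n <= n)%N)
  (hlim : (fun n : nat => (B n)%:R / n%:R : R) @ \oo --> q)
  (lambda : nat -> nat -> R)
  (hlambda : forall Bn n : nat, (1 <= Bn <= n)%N -> is_lambda p Bn n (lambda Bn n)) :
  (fun n : nat => lambda (B n) n) @ \oo -->
    (if q <= 1 - p then 0 else (q - (1 - p)) / p).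
Proof.
have B_range m : (1 <= B m.+1 <= m.+1)%N := hB m.+1 isT.
have B_pos m : (0 < B m.+1)%N by case/andP: (B_range m).
have lam m := hlambda _ _ (B_range m).
(* Index by the number m = n - 1 of the other players. *)
rewrite -cvg_shiftS -/(lambda_limit p q); apply/cvgrPdist_le => eps eps0.
have [e e01 e_le] : exists2 e : R, 0 < e <= 1 & e <= eps.
  by case: (leP eps 1) => ?; [exists eps | exists 1]; rewrite ?eps0 ?ltr01 //; lra.
suff : \forall m \near \oo, `|lambda_limit p q - lambda (B m.+1) m.+1| <= e.
  by apply: filterS => m /le_trans; apply.
apply: (near_lambda_close (k := fun m => (B m.+1).-1) hp hq _ _ _ _ _ e01) => [m|m|m|m|d d0].
- by case/andP: (B_range m); lia.
- by case: (lam m).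
- exact: (sym_lambda_tails (B_pos m) (lam m)).1.
- exact: (sym_lambda_tails (B_pos m) (lam m)).2.
- by apply: near_count_bounds => //; move: hlim; rewrite -cvg_shiftS.
Qed.
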